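(* For the $N$-relay 1-2-1 diamond network with relays operating in HD, the linear program $\mathrm{P1^d}$ with $\mathsf C_p=\frac{\ell_{p,0}\ell_{N+1,p}}{\ell_{p,0}+\ell_{N+1,p}}$ has an optimal solution $(x_1,\dots,x_N)$ with at most $3$ indices $p$ such that $x_p>0$. Hence the HD approximate capacity $\mathsf{C}_{\rm cs,iid}$ is achieved by activating at most three relays, independently of $N$.
   Context: Diamond network: nodes $[0:N+1]$, source $0$, destination $N+1$, relays $[1:N]$; the only links are $(0,p)$ and $(p,N+1)$ for $p\in[1:N]$, with positive capacities $\ell_{p,0}$ and $\ell_{N+1,p}$. $\mathrm{P1^d}$ is the linear program $\max\sum_{p=1}^N x_p\mathsf C_p$ subject to $0\le x_p\le1$ for all $p\in[1:N]$, $\sum_{p=1}^N x_p\mathsf C_p/\ell_{p,0}\le1$, and $\sum_{p=1}^N x_p\mathsf C_p/\ell_{N+1,p}\le1$. In the HD case (with the HD $\mathsf C_p$ above) its optimal value equals $\mathsf{C}_{\rm cs,iid}$, the HD approximate capacity $\max_\lambda\min_\Omega\sum_{i\in\Omega,j\in\Omega^c}(\sum_{s:\,(i,j)\text{ active in }s}\lambda_s)\ell_{j,i}$ over probability vectors on HD beam states and cuts $0\in\Omega\subseteq[0:N]$. *)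

From HB Require Import structures.
From mathcomp Require Import all_boot all_order all_algebra.
Set Implicit Arguments. Unset Strict Implicit. Unset Printing Implicit Defensive.
Import Order.TTheory GRing.Theory Num.Theory.
Local Open Scope ring_scope.

(* Diamond network with N relays indexed by p : 'I_N (relay p of the paper is
   relay index p+1).  l0 p = \ell_{p,0} (source -> relay p),
   l1 p = \ell_{N+1,p} (relay p -> destination). *)

Definition Chd (R : realFieldType) (N : nat) (l0 l1 : 'I_N -> R) (p : 'I_N) : R :=
  l0 p * l1 p / (l0 p + l1 p).

Definition P1d_feasible (R : realFieldType) (N : nat) (l0 l1 C : 'I_N -> R)
  (x : 'I_N -> R) : Prop :=
  (forall p, 0 <= x p <= 1) /\
  \sum_(p < N) x p * C p / l0 p <= 1 /\
  \sum_(p < N) x p * C p / l1 p <= 1.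

Definition P1d_obj (R : realFieldType) (N : nat) (C : 'I_N -> R) (x : 'I_N -> R) : R :=
  \sum_(p < N) x p * C p.

Definition P1d_optimal (R : realFieldType) (N : nat) (l0 l1 C : 'I_N -> R)
  (x : 'I_N -> R) : Prop :=
  P1d_feasible l0 l1 C x /\
  forall y, P1d_feasible l0 l1 C y -> P1d_obj C y <= P1d_obj C x.

(* P1^d maximises a linear objective over the box [0,1]^N cut by two knapsack
   constraints, with weights w1 p = C_p / l_{p,0} and w2 p = C_p / l_{N+1,p};
   for the HD rates w1 p + w2 p = 1.  The optimum is attained at a vertex, a
   feasible point determined by its active constraints: from any feasible
   point one can move, without decreasing the objective, along a direction
   that keeps the active constraints active until a new one becomes active,
   and there are only finitely many active sets.  A vertex has at most two
   fractional coordinates, since three of them would leave a direction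
   orthogonal to (1,...,1) and to w1, hence also to w2 = 1 - w1.  Finally
   w1 + w2 = 1 gives sum_p x p <= 2, so at most two coordinates equal 1, and
   at most one if some coordinate is fractional. *)

From HB Require Import structures.
From mathcomp Require Import all_boot all_order all_algebra.
From mathcomp Require Import ring lra zify.
From Stdlib Require Import Classical.
Import Order.TTheory GRing.Theory Num.Theory.

Set Implicit Arguments. Unset Strict Implicit. Unset Printing Implicit Defensive.

Local Open Scope ring_scope.

Lemma ratio_test (R : realFieldType) (K : finType) (s t : K -> R) (k0 : K) :
  (forall k, 0 <= s k) -> t k0 < 0 ->
  exists e, [/\ 0 <= e, forall k, 0 <= s k + e * t k
              & exists2 k1, t k1 < 0 & s k1 + e * t k1 = 0].
Proof.
move=> s_ge0 tk0.
have [k1 tk1 k1_min] := @arg_minP _ R K k0 (fun k => t k < 0) (fun k => s k / - t k) tk0.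
have nt1 : 0 < - t k1 by rewrite oppr_gt0.
exists (s k1 / - t k1); split.
- by rewrite divr_ge0 // ltW.
- move=> k; have [tk|tk] := ltP (t k) 0.
    have ntk : 0 < - t k by rewrite oppr_gt0.
    have := ler_wpM2r (ltW ntk) (k1_min k tk).
    rewrite divfK ?gt_eqF // mulrN; lra.
  by rewrite addr_ge0 // mulr_ge0 // divr_ge0 // ltW.
- by exists k1 => //; field; rewrite lt_eqF.
Qed.

Lemma argmax_finite_signature (X : Type) (K : finType) (R : realDomainType)
    (P : X -> Prop) (sig : X -> K) (f : X -> R) :
  (forall x y, P x -> P y -> sig x = sig y -> f x = f y) ->
  (exists x, P x) -> exists2 v, P v & forall x, P x -> f x <= f v.
Proof.
move=> sig_f [x0 Px0].
suff /(_ (enum K)) : forall s : seq K, (exists x, P x /\ sig x \in s) ->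
    exists2 v, P v & forall x, P x -> sig x \in s -> f x <= f v.
  case=> [|v Pv v_max]; first by exists x0; rewrite mem_enum.
  by exists v => // x Px; rewrite v_max ?mem_enum.
elim=> [|k s IH]; first by case=> x [_]; rewrite in_nil.
have [[z [Pz /eqP zk]]|no_k] := classic (exists z, P z /\ sig z == k).
- have [[y [Py ys]]|no_s] := classic (exists y, P y /\ sig y \in s).
    have [v Pv v_max] := IH (ex_intro _ y (conj Py ys)).
    have [fzv|fvz] := lerP (f z) (f v); [exists v | exists z] => // x Px;
      rewrite in_cons => /orP[/eqP xk|xs].
    + by rewrite (sig_f x z) // xk zk.
    + exact: v_max.
    + by rewrite (sig_f x z) // xk zk.
    + exact: le_trans (v_max x Px xs) (ltW fvz).
  exists z => // x Px; rewrite in_cons => /orP[/eqP xk|xs].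
    by rewrite (sig_f x z) // xk zk.
  by case: no_s; exists x.
- case=> x [Px]; rewrite in_cons => /orP[xk|xs]; first by case: no_k; exists x.
  have [v Pv v_max] := IH (ex_intro _ x (conj Px xs)).
  exists v => // y Py; rewrite in_cons => /orP[yk|ys]; last exact: v_max.
  by case: no_k; exists y.
Qed.

Section TwoKnapsackLP.

Variables (R : realFieldType) (N : nat) (w1 w2 : 'I_N -> R).

Definition dotp (x w : 'I_N -> R) : R := \sum_(p < N) x p * w p.

Lemma dotp0 w : dotp (fun=> 0) w = 0.
Proof. by rewrite /dotp big1 // => p _; rewrite mul0r. Qed.

Lemma dotpN d w : dotp (fun p => - d p) w = - dotp d w.
Proof. by rewrite /dotp -sumrN; apply: eq_bigr => p _; rewrite mulNr. Qed.

Lemma dotpB x y w : dotp (fun p => x p - y p) w = dotp x w - dotp y w.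
Proof. by rewrite /dotp -sumrB; apply: eq_bigr => p _; rewrite mulrBl. Qed.

Lemma dotp_shift x d e w :
  dotp (fun p => x p + e * d p) w = dotp x w + e * dotp d w.
Proof. by rewrite /dotp mulr_sumr -big_split; apply: eq_bigr => p _ /=; ring. Qed.

Definition slack (x : 'I_N -> R) (k : 'I_N * bool + bool) : R :=
  match k with
  | inl (p, false) => x p
  | inl (p, true) => 1 - x p
  | inr false => 1 - dotp x w1
  | inr true => 1 - dotp x w2
  end.

Definition slack_dir (d : 'I_N -> R) (k : 'I_N * bool + bool) : R :=
  match k with
  | inl (p, false) => d p
  | inl (p, true) => - d p
  | inr false => - dotp d w1
  | inr true => - dotp d w2
  end.

Lemma slack_shift x d e k :
  slack (fun p => x p + e * d p) k = slack x k + e * slack_dir d k.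
Proof. by case: k => [[p []]|[]] /=; rewrite ?dotp_shift; ring. Qed.

Lemma slackB x y k : slack x k - slack y k = slack_dir (fun p => x p - y p) k.
Proof. by case: k => [[p []]|[]] /=; rewrite ?dotpB; ring. Qed.

Lemma slack_dirN d k : slack_dir (fun p => - d p) k = - slack_dir d k.
Proof. by case: k => [[p []]|[]] /=; rewrite ?dotpN ?opprK. Qed.

Definition feasible x := forall k, 0 <= slack x k.

Definition active x : {set 'I_N * bool + bool} := [set k | slack x k == 0].

Definition vertex x :=
  forall d, {in active x, forall k, slack_dir d k = 0} -> forall p, d p = 0.

Lemma feasibleP x :
  feasible x <-> (forall p, 0 <= x p <= 1) /\ dotp x w1 <= 1 /\ dotp x w2 <= 1.
Proof.
split=> [fx | [box [le1 le2]]]; last first.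
  by case=> [[p []]|[]] /=; rewrite ?subr_ge0 //; case/andP: (box p).
split=> [p|]; first by rewrite (fx (inl (p, false))) -subr_ge0 (fx (inl (p, true))).
by split; rewrite -subr_ge0; [exact: fx (inr false) | exact: fx (inr true)].
Qed.

Lemma feasible0 : feasible (fun=> 0).
Proof. by case=> [[p []]|[]] /=; rewrite ?dotp0 ?subr0 ?ler01. Qed.

Lemma vertex_active_inj x y : vertex x -> active x = active y -> forall p, x p = y p.
Proof.
move=> vx exy p; apply/eqP; rewrite -subr_eq0; apply/eqP.
apply: (vx (fun p => x p - y p)) => k kx.
have ky : k \in active y by rewrite -exy.
by move: kx ky; rewrite !inE -slackB => /eqP-> /eqP->; rewrite subr0.
Qed.

Lemma improve_to_larger_active c y :
  feasible y -> ~ vertex y ->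
  exists y', [/\ feasible y', dotp y c <= dotp y' c & active y \proper active y'].
Proof.
move=> fy nvy.
have [d [d_act [p0 dp0]]] : exists d, {in active y, forall k, slack_dir d k = 0} /\
    exists p, d p != 0.
  apply: NNPP => nd; apply: nvy => d d_act p; apply: NNPP => dp.
  by apply: nd; exists d; split=> //; exists p; apply/eqP.
(* Both [d] and [-d] keep the active constraints active; take the one that
   does not decrease the objective. *)
have [{}d [{}d_act {}dp0 dc]] : exists d', [/\ {in active y, forall k, slack_dir d' k = 0},
    d' p0 != 0 & 0 <= dotp d' c].
  have [dc|dc] := lerP 0 (dotp d c); first by exists d.
  exists (fun p => - d p); split; rewrite ?oppr_eq0 ?dotpN ?oppr_ge0 ?ltW //.
  by move=> k /d_act; rewrite slack_dirN => ->; rewrite oppr0.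
have [k0 tk0] : exists k0, slack_dir d k0 < 0.
  have [dp|dp] := ltP 0 (d p0); first by exists (inl (p0, true)); rewrite /= oppr_lt0.
  by exists (inl (p0, false)); rewrite /= lt_neqAle dp0.
have [e [e0 ge0 [k1 tk1 sk1]]] := ratio_test fy tk0.
exists (fun p => y p + e * d p); split.
- by move=> k; rewrite slack_shift.
- by rewrite dotp_shift lerDl mulr_ge0.
- apply/properP; split.
    apply/subsetP => k ky; rewrite inE slack_shift d_act // mulr0 addr0.
    by rewrite inE in ky.
  exists k1; first by rewrite inE slack_shift sk1.
  by apply: contraTN tk1 => /d_act ->; rewrite ltxx.
Qed.

Lemma exists_dominating_vertex c y :
  feasible y -> exists2 v, feasible v /\ vertex v & dotp y c <= dotp v c.
Proof.
move: {2}#|~: active y| (leqnn #|~: active y|) => n.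
elim: n y => [|n IH] y hn fy; have [vy|nvy] := classic (vertex y);
  try by exists y.
- have [y' [_ _ /proper_card]] := improve_to_larger_active c fy nvy.
  by move: (cardsC (active y)) (cardsC (active y')); lia.
- have [y' [fy' le_yy' /proper_card lt_card]] := improve_to_larger_active c fy nvy.
  have [|v fv le_y'v] := IH y' _ fy'.
    by move: (cardsC (active y)) (cardsC (active y')); lia.
  by exists v => //; apply: le_trans le_y'v.
Qed.

Lemma exists_optimal_vertex c :
  exists2 v, feasible v /\ vertex v & forall y, feasible y -> dotp y c <= dotp v c.
Proof.
have same_value x y : feasible x /\ vertex x -> feasible y /\ vertex y ->
    active x = active y -> dotp x c = dotp y c.
  by move=> [_ vx] _ exy; apply: eq_bigr => p _; rewrite (vertex_active_inj vx exy).
have [|v fvv v_max] := argmax_finite_signature same_value.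
  by have [v] := exists_dominating_vertex c feasible0; exists v.
exists v => // y fy; have [u fu le_yu] := exists_dominating_vertex c fy.
exact: le_trans le_yu (v_max u fu).
Qed.

End TwoKnapsackLP.

Lemma dotp_three (R : realFieldType) N (w : 'I_N -> R) (i j k : 'I_N) (a b c : R) :
  dotp (fun p => a * (p == i)%:R + b * (p == j)%:R + c * (p == k)%:R) w =
  a * w i + b * w j + c * w k.
Proof.
have delta (q : 'I_N) : \sum_(p < N) (p == q)%:R * w p = w q.
  by rewrite (bigD1 q) //= eqxx mul1r big1 ?addr0 // => p /negbTE->; rewrite mul0r.
rewrite /dotp; under eq_bigr do rewrite !mulrDl -!mulrA.
by rewrite !big_split /= -!mulr_sumr !delta.
Qed.

(* Three free coordinates cannot be pinned down by two linear equations: the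
   cross product of [(1, 1, 1)] and [(u i, u j, u k)] is a kernel vector. *)
Lemma three_point_kernel (R : realFieldType) N (u : 'I_N -> R) (i j k : 'I_N) :
  [/\ i != j, j != k & k != i] ->
  exists d : 'I_N -> R, [/\ forall p, d p != 0 -> p \in [:: i; j; k],
    dotp d (fun=> 1) = 0, dotp d u = 0 & exists p, d p != 0].
Proof.
move=> [ij jk ki].
have supp a b c p : a * (p == i)%:R + b * (p == j)%:R + c * (p == k)%:R != 0 ->
    p \in [:: i; j; k].
  by apply: contraR; rewrite !inE => /norP[/negbTE-> /norP[/negbTE-> /negbTE->]];
    rewrite !mulr0 !addr0 eqxx.
have [uij|uij] := eqVneq (u i) (u j).
  exists (fun p => 1 * (p == i)%:R + (-1) * (p == j)%:R + 0 * (p == k)%:R).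
  split; [exact: supp | rewrite dotp_three; ring | rewrite dotp_three uij; ring |].
  by exists i; rewrite eqxx (negbTE ij) mul0r mulr0 !addr0 mulr1 oner_eq0.
exists (fun p => (u j - u k) * (p == i)%:R + (u k - u i) * (p == j)%:R +
  (u i - u j) * (p == k)%:R).
split; [exact: supp | rewrite dotp_three; ring | rewrite dotp_three; ring |].
have kj : k != j by rewrite eq_sym.
exists k; rewrite eqxx (negbTE ki) (negbTE kj) !mulr0 !add0r mulr1.
by rewrite subr_eq0.
Qed.

Section ComplementaryWeights.

Variables (R : realFieldType) (N : nat) (w1 w2 : 'I_N -> R).
Hypothesis w12 : forall p, w1 p + w2 p = 1.

Lemma dotp_complementary x : dotp x w1 + dotp x w2 = \sum_(p < N) x p.
Proof. by rewrite -big_split; apply: eq_bigr => p _ /=; rewrite -mulrDr w12 mulr1. Qed.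

Lemma vertex_fractional_card x :
  vertex w1 w2 x -> (#|[set p | (0 < x p < 1)%R]| <= 2)%N.
Proof.
move=> vx; rewrite leqNgt; apply/card_gt2P => -[i [j [k [[iF jF kF] distinct]]]].
have [d [d_supp d_sum d_w1 [p0]]] := three_point_kernel w1 distinct.
apply/negP; rewrite negbK; apply/eqP; apply: vx => -[[p b]|[]] act /=.
- suff -> : d p = 0 by case: b act => _; rewrite ?oppr0.
  apply/eqP; apply: contraTT act => /d_supp; rewrite !inE => ijk.
  have frac : 0 < x p < 1.
    by case/or3P: ijk => /eqP->; [move: iF | move: jF | move: kF]; rewrite inE.
  by case/andP: frac; case: b => x0 x1 /=; rewrite ?subr_eq0 gt_eqF.
- have := dotp_complementary d; rewrite d_w1 add0r => ->.
  have <- : dotp d (fun=> 1) = \sum_(p < N) d p.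
    by apply: eq_bigr => p _; rewrite mulr1.
  by rewrite d_sum oppr0.
- by rewrite d_w1 oppr0.
Qed.

Lemma vertex_support_card x :
  feasible w1 w2 x -> vertex w1 w2 x -> (#|[set p | (0 < x p)%R]| <= 3)%N.
Proof.
move=> fx vx; have /feasibleP [box [le1 le2]] := fx.
set ones := [set p | x p == 1]; set fracs := [set p | (0 < x p < 1)%R].
have fracs_le2 : (#|fracs| <= 2)%N := vertex_fractional_card vx.
have supp_sub : [set p | (0 < x p)%R] \subset ones :|: fracs.
  apply/subsetP => p; rewrite !inE => xp0; have /andP[_ xp1] := box p.
  by rewrite xp0 /= -le_eqVlt.
have mass : #|ones|%:R + \sum_(p in fracs) x p <= 2 :> R.
  have <- : \sum_p ((if p \in ones then 1 else 0) + (if p \in fracs then x p else 0)) =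
      #|ones|%:R + \sum_(p in fracs) x p.
    by rewrite big_split /= -!big_mkcond sumr_const.
  apply: le_trans (_ : \sum_p x p <= 2); last by rewrite -dotp_complementary; lra.
  apply: ler_sum => p _; rewrite !inE; have /andP[xp0 xp1] := box p.
  have [->|xp_ne1] := eqVneq (x p) 1; first by rewrite ltxx andbF addr0.
  by rewrite add0r; case: ifP.
have fracs_ge0 : 0 <= \sum_(p in fracs) x p.
  by apply: sumr_ge0 => p; rewrite inE => /andP[/ltW].
apply: leq_trans (subset_leq_card supp_sub) _; rewrite cardsU.
apply: leq_trans (leq_subr _ _) _.
have [fracs0|[p0 p0F]] := set_0Vmem fracs.
  rewrite fracs0 cards0 addn0; rewrite -(ler_nat R); lra.
have ones_le1 : (#|ones| <= 1)%N.
  rewrite -ltnS -(ltr_nat R); apply: lt_le_trans (_ : _ < 2) _ => //.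
  have : x p0 <= \sum_(p in fracs) x p.
    rewrite (bigD1 p0) //= lerDl; apply: sumr_ge0 => p /andP[].
    by rewrite inE => /andP[/ltW].
  by move: p0F; rewrite inE => /andP[xp0 _]; lra.
by rewrite -[3%N]/(1 + 2)%N leq_add.
Qed.

End ComplementaryWeights.

Unset Implicit Arguments.

Theorem lemma5 (R : realFieldType) (N : nat) (l0 l1 : 'I_N -> R)
  (hl0 : forall p, 0 < l0 p) (hl1 : forall p, 0 < l1 p) :
  exists x : 'I_N -> R,
    P1d_optimal l0 l1 (Chd l0 l1) x /\
    (#|[set p : 'I_N | (0 < x p)%R]| <= 3)%N.
Proof.
pose C := Chd l0 l1; pose w1 p := C p / l0 p; pose w2 p := C p / l1 p.
have w12 p : w1 p + w2 p = 1.
  have l0_neq0 := gt_eqF (hl0 p); have l1_neq0 := gt_eqF (hl1 p).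
  have l01_neq0 := gt_eqF (addr_gt0 (hl0 p) (hl1 p)).
  by rewrite /w1 /w2 /C /Chd; field; rewrite l0_neq0 l1_neq0 l01_neq0.
have feasibleE y : P1d_feasible l0 l1 C y <-> feasible w1 w2 y.
  have dotpE (l : 'I_N -> R) : dotp y (fun p => C p / l p) = \sum_(p < N) y p * C p / l p.
    by apply: eq_bigr => p _; rewrite mulrA.
  by rewrite feasibleP !dotpE.
have [v [fv vv] v_max] := exists_optimal_vertex w1 w2 C.
exists v; split; last exact: (vertex_support_card w12 fv vv).
by split=> [|y /feasibleE]; [apply/feasibleE | exact: v_max].
Qed.
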